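(* Let $L$ be a Lie superalgebra and $\{N_i\}_{i\in J}$ a family of graded ideals of $L$ such that $L/N_i$ is capable for every $i\in J$. Then $L/\bigcap_{i\in J}N_i$ is capable.
   Context: All algebras are over a field $\mathbb{F}$ of characteristic $\neq 2,3$. A Lie superalgebra $L$ is capable if $L\cong H/Z(H)$ for some Lie superalgebra $H$, where $Z(H)$ is the center. *)

From HB Require Import structures.
From mathcomp Require Import all_boot all_order all_algebra.
Set Implicit Arguments. Unset Strict Implicit. Unset Printing Implicit Defensive.
Import GRing.Theory.
Local Open Scope ring_scope.

Definition subspace (F : fieldType) (V : lmodType F) (P : V -> Prop) : Prop :=
  P 0 /\ forall (k : F) (u v : V), P u -> P v -> P (k *: u + v).

(* homogeneous of degree b (false = even, true = odd) *)
Definition homog (F : fieldType) (V : lmodType F) (ev od : V -> Prop)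
  (b : bool) (x : V) : Prop := if b then od x else ev x.

Definition sgn (F : fieldType) (b : bool) : F := if b then -1 else 1.

Definition is_lie_super (F : fieldType) (V : lmodType F)
  (ev od : V -> Prop) (br : V -> V -> V) : Prop :=
  subspace ev /\ subspace od /\
      (forall x : V, exists x0 x1, [/\ ev x0, od x1 & x = x0 + x1]) /\
      (forall x : V, ev x -> od x -> x = 0) /\
      (forall (k : F) (x y z : V), br (k *: x + y) z = k *: br x z + br y z) /\
      (forall (k : F) (x y z : V), br x (k *: y + z) = k *: br x y + br x z) /\
      (forall (a b : bool) (x y : V), homog ev od a x -> homog ev od b y ->
           homog ev od (addb a b) (br x y)) /\
      (forall (a b : bool) (x y : V), homog ev od a x -> homog ev od b y ->
           br x y = - (sgn F (a && b) *: br y x)) /\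
      (forall (a b c : bool) (x y z : V),
           homog ev od a x -> homog ev od b y -> homog ev od c z ->
           sgn F (a && c) *: br x (br y z) + sgn F (a && b) *: br y (br z x)
             + sgn F (b && c) *: br z (br x y) = 0).

Record lieSuper (F : fieldType) := LieSuper {
  lcarrier :> lmodType F;
  lev : lcarrier -> Prop;
  lod : lcarrier -> Prop;
  lbr : lcarrier -> lcarrier -> lcarrier;
  lieP : is_lie_super lev lod lbr
}.

Definition graded_ideal (F : fieldType) (L : lieSuper F) (N : L -> Prop) : Prop :=
  [/\ subspace N,
      (forall x0 x1 : L, lev x0 -> lod x1 -> N (x0 + x1) -> N x0 /\ N x1) &
      (forall x y : L, N y -> N (lbr x y))].

Definition lie_hom (F : fieldType) (H L : lieSuper F) (f : H -> L) : Prop :=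
  [/\ (forall (k : F) (x y : H), f (k *: x + y) = k *: f x + f y),
      (forall x : H, lev x -> lev (f x)),
      (forall x : H, lod x -> lod (f x)) &
      (forall x y : H, f (lbr x y) = lbr (f x) (f y))].

Definition center (F : fieldType) (H : lieSuper F) (z : H) : Prop :=
  forall x : H, lbr z x = 0.

(* p : L -> Q exhibits Q as the quotient L/N, i.e. p is a surjective
   homomorphism with kernel N (so Q is isomorphic to L/N). *)
Definition is_quotient (F : fieldType) (L Q : lieSuper F) (p : L -> Q)
  (N : L -> Prop) : Prop :=
  [/\ lie_hom p, (forall q : Q, exists x : L, p x = q) &
      (forall x : L, p x = 0 <-> N x)].

Definition capable (F : fieldType) (L : lieSuper F) : Prop :=
  exists (H : lieSuper F) (f : H -> L), is_quotient f (@center F H).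

From HB Require Import structures.
From mathcomp Require Import all_boot all_order all_algebra.
From mathcomp Require Import boolp.
Set Implicit Arguments. Unset Strict Implicit. Unset Printing Implicit Defensive.
Import GRing.Theory.
Local Open Scope ring_scope.

(* Write Q = L / (cap_i N_i) and choose L / N_i = H_i / Z(H_i) via f_i. Inside
   Q x prod_i H_i consider the fibre product
     H = { (q, (h_i)) | exists l in L, q = l mod cap N_i and f_i h_i = l mod N_i },
   a graded subalgebra.  Its projection to Q is onto, and (q, (h_i)) is central
   in H iff every h_i is central in H_i (the component h_i can be prescribed
   freely), i.e. iff the witness l lies in every N_i, i.e. iff q = 0.  So
   Q = H / Z(H). *)

Lemma dfun_choice (I : Type) (T : I -> Type) (P : forall i, T i -> Prop) :
  (forall i, exists t, P i t) -> exists g : forall i, T i, forall i, P i (g i).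
Proof. by move=> h; exists (fun i => sval (cid (h i))) => i; case: cid. Qed.

Lemma dfun_choice_with (I : Type) (T : I -> Type) (P : forall i, T i -> Prop)
    (i : I) (y : T i) :
  P i y -> (forall j, exists t, P j t) ->
  exists g : forall j, T j, g i = y /\ forall j, P j (g j).
Proof.
move=> Py /dfun_choice [g Pg].
exists (fun j => if pselect (i = j) is left e then eq_rect i T y j e else g j).
split=> [|j]; case: pselect => [e|//].
- by rewrite (Prop_irrelevance e erefl).
- by case: j / e.
Qed.

Section Subspace.
Variables (F : fieldType) (V : lmodType F) (P : V -> Prop).
Hypothesis P_sub : subspace P.

Lemma subspaceD u v : P u -> P v -> P (u + v).
Proof. by move=> Pu Pv; rewrite -[u]scale1r; apply: (proj2 P_sub). Qed.

Lemma subspaceZ k u : P u -> P (k *: u).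
Proof.
by move=> Pu; rewrite -[_ *: _]addr0; apply: (proj2 P_sub) => //; case: P_sub.
Qed.

Lemma subspaceN u : P u -> P (- u).
Proof. by rewrite -scaleN1r; apply: subspaceZ. Qed.

Lemma subspaceB u v : P u -> P v -> P (u - v).
Proof. by move=> Pu /subspaceN; apply: subspaceD. Qed.

End Subspace.

Section Semilinear.
Variables (F : fieldType) (U V : lmodType F) (f : U -> V).
Hypothesis f_lin : forall k x y, f (k *: x + y) = k *: f x + f y.

Lemma semilin0 : f 0 = 0.
Proof.
have := f_lin 1 0 0; rewrite !scale1r !addr0 => e.
by apply: (addrI (f 0)); rewrite addr0 -e.
Qed.

Lemma semilinD x y : f (x + y) = f x + f y.
Proof. by have := f_lin 1 x y; rewrite !scale1r. Qed.

End Semilinear.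

Section LieSuperAxioms.
Variables (F : fieldType) (L : lieSuper F).
Local Notation homogL := (homog (@lev F L) (@lod F L)).

Lemma lev_subspace : subspace (@lev F L). Proof. by case: (lieP L). Qed.
Lemma lod_subspace : subspace (@lod F L). Proof. by case: (lieP L) => _ []. Qed.

Lemma lie_decomp (x : L) : exists x0 x1, [/\ lev x0, lod x1 & x = x0 + x1].
Proof. by case: (lieP L) => _ [_ [h _]]. Qed.
Lemma ev_od_eq0 (x : L) : lev x -> lod x -> x = 0.
Proof. by case: (lieP L) => _ [_ [_ [h _]]]; apply: h. Qed.
Lemma lbr_linl k (x y z : L) : lbr (k *: x + y) z = k *: lbr x z + lbr y z.
Proof. by case: (lieP L) => _ [_ [_ [_ [h _]]]]. Qed.
Lemma lbr_linr k (x y z : L) : lbr x (k *: y + z) = k *: lbr x y + lbr x z.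
Proof. by case: (lieP L) => _ [_ [_ [_ [_ [h _]]]]]. Qed.
Lemma lbr_homog a b (x y : L) :
  homogL a x -> homogL b y -> homogL (addb a b) (lbr x y).
Proof. by case: (lieP L) => _ [_ [_ [_ [_ [_ [h _]]]]]]; apply: h. Qed.
Lemma lbr_antisym a b (x y : L) :
  homogL a x -> homogL b y -> lbr x y = - (sgn F (a && b) *: lbr y x).
Proof. by case: (lieP L) => _ [_ [_ [_ [_ [_ [_ [h _]]]]]]]; apply: h. Qed.
Lemma lbr_jacobi a b c (x y z : L) :
  homogL a x -> homogL b y -> homogL c z ->
  sgn F (a && c) *: lbr x (lbr y z) + sgn F (a && b) *: lbr y (lbr z x)
    + sgn F (b && c) *: lbr z (lbr x y) = 0.
Proof. by case: (lieP L) => _ [_ [_ [_ [_ [_ [_ [_ h]]]]]]]; apply: h. Qed.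

Lemma lbr0l (z : L) : lbr 0 z = 0.
Proof. exact: (semilin0 (fun k x y => lbr_linl k x y z)). Qed.

Lemma lie_decomp_uniq (x0 x1 y0 y1 : L) : lev x0 -> lod x1 -> lev y0 -> lod y1 ->
  x0 + x1 = y0 + y1 -> x0 = y0 /\ x1 = y1.
Proof.
move=> ex0 ox1 ey0 oy1 e.
have d : x0 - y0 = y1 - x1.
  by apply/eqP; rewrite subr_eq addrAC [y1 + _]addrC -e addrK.
have d0 : x0 - y0 = 0.
  apply: ev_od_eq0; first exact: (subspaceB lev_subspace).
  by rewrite d; apply: (subspaceB lod_subspace).
move/eqP: d0; rewrite subr_eq0 => /eqP x0y0.
by split=> //; apply: (addrI x0); rewrite e x0y0.
Qed.

End LieSuperAxioms.

Section DependentProduct.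
Variables (F : fieldType) (I : Type) (V : I -> lmodType F).

Definition dprod := forall i, V i.
HB.instance Definition _ := Choice.on dprod.

Definition dprod_zero : dprod := fun i => 0.
Definition dprod_opp (x : dprod) : dprod := fun i => - x i.
Definition dprod_add (x y : dprod) : dprod := fun i => x i + y i.
Definition dprod_scale (k : F) (x : dprod) : dprod := fun i => k *: x i.

Lemma dprod_addA : associative dprod_add.
Proof. by move=> x y z; apply: functional_extensionality_dep => i; apply: addrA. Qed.
Lemma dprod_addC : commutative dprod_add.
Proof. by move=> x y; apply: functional_extensionality_dep => i; apply: addrC. Qed.
Lemma dprod_add0 : left_id dprod_zero dprod_add.
Proof. by move=> x; apply: functional_extensionality_dep => i; apply: add0r. Qed.
Lemma dprod_addN : left_inverse dprod_zero dprod_opp dprod_add.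
Proof. by move=> x; apply: functional_extensionality_dep => i; apply: addNr. Qed.

HB.instance Definition _ :=
  GRing.isZmodule.Build dprod dprod_addA dprod_addC dprod_add0 dprod_addN.

Lemma dprod_scaleA a b x : dprod_scale a (dprod_scale b x) = dprod_scale (a * b) x.
Proof. by apply: functional_extensionality_dep => i; apply: scalerA. Qed.
Lemma dprod_scale1 : left_id 1 dprod_scale.
Proof. by move=> x; apply: functional_extensionality_dep => i; apply: scale1r. Qed.
Lemma dprod_scaleDr : right_distributive dprod_scale +%R.
Proof. by move=> k x y; apply: functional_extensionality_dep => i; apply: scalerDr. Qed.
Lemma dprod_scaleDl x : {morph dprod_scale^~ x : a b / a + b}.
Proof. by move=> a b; apply: functional_extensionality_dep => i; apply: scalerDl. Qed.

HB.instance Definition _ := GRing.Zmodule_isLmodule.Build F dprod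
  dprod_scaleA dprod_scale1 dprod_scaleDr dprod_scaleDl.

End DependentProduct.

Section ProductLie.
Variables (F : fieldType) (I : Type) (Ls : I -> lieSuper F).
Local Notation P := (dprod (fun i => lcarrier (Ls i))).

Definition prod_ev (x : P) := forall i, lev (x i).
Definition prod_od (x : P) := forall i, lod (x i).
Definition prod_br (x y : P) : P := fun i => lbr (x i) (y i).

Lemma homog_prod b (x : P) :
  homog prod_ev prod_od b x <-> forall i, homog (@lev F (Ls i)) (@lod F (Ls i)) b (x i).
Proof. by case: b. Qed.

Lemma prod_subspace (S : forall L : lieSuper F, L -> Prop) :
  (forall L, subspace (S L)) -> subspace (fun x : P => forall i, S (Ls i) (x i)).
Proof.
move=> h; split=> [i|k u v Su Sv i]; first by case: (h (Ls i)).
exact: (proj2 (h _)).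
Qed.

Lemma prod_decomp (x : P) : exists x0 x1, [/\ prod_ev x0, prod_od x1 & x = x0 + x1].
Proof.
have [x0 hx0] : exists x0 : P, forall i, lev (x0 i) /\ lod (x i - x0 i).
  apply: (dfun_choice (P := fun i (t : Ls i) => lev t /\ lod (x i - t))) => i.
  have [y0 [y1 [ey0 oy1 ->]]] := lie_decomp (x i).
  by exists y0; rewrite addrC addKr.
by exists x0, (x - x0); split=> [i|i|]; [case: (hx0 i)..| rewrite addrC subrK].
Qed.

Lemma prod_lieP : is_lie_super prod_ev prod_od prod_br.
Proof.
split; first exact: (prod_subspace (fun L => @lev_subspace F L)).
split; first exact: (prod_subspace (fun L => @lod_subspace F L)).
split; first exact: prod_decomp.
split.
  by move=> x ex ox; apply: functional_extensionality_dep => i; apply: ev_od_eq0.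
split.
  by move=> k x y z; apply: functional_extensionality_dep => i; apply: lbr_linl.
split.
  by move=> k x y z; apply: functional_extensionality_dep => i; apply: lbr_linr.
split.
  move=> a b x y /homog_prod hx /homog_prod hy.
  by apply/homog_prod => i; apply: lbr_homog.
split.
  move=> a b x y /homog_prod hx /homog_prod hy.
  by apply: functional_extensionality_dep => i; apply: lbr_antisym.
move=> a b c x y z /homog_prod hx /homog_prod hy /homog_prod hz.
by apply: functional_extensionality_dep => i; apply: lbr_jacobi.
Qed.

Definition prod_lie : lieSuper F := LieSuper prod_lieP.

End ProductLie.

Section GradedSubalgebra.
Variables (F : fieldType) (L : lieSuper F) (S : L -> Prop).
Hypothesis S_subspace : subspace S.
Hypothesis S_br : forall x y, S x -> S y -> S (lbr x y).
Hypothesis S_graded : forall x0 x1, lev x0 -> lod x1 -> S (x0 + x1) -> S x0.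

Definition sub_carrier := {x : L | S x}.
HB.instance Definition _ := gen_eqMixin sub_carrier.
HB.instance Definition _ := gen_choiceMixin sub_carrier.

Lemma sub_val_inj : injective (@proj1_sig L S).
Proof. by move=> [x Sx] [y Sy] /= e; apply: eq_exist. Qed.

Definition sub_zero : sub_carrier := exist S 0 (proj1 S_subspace).
Definition sub_scale k (x : sub_carrier) : sub_carrier :=
  exist S (k *: sval x) (subspaceZ S_subspace k (svalP x)).
Definition sub_add (x y : sub_carrier) : sub_carrier :=
  exist S (sval x + sval y) (subspaceD S_subspace (svalP x) (svalP y)).
Definition sub_opp (x : sub_carrier) : sub_carrier :=
  exist S (- sval x) (subspaceN S_subspace (svalP x)).

Lemma sub_addA : associative sub_add.
Proof. by move=> x y z; apply: sub_val_inj; apply: addrA. Qed.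
Lemma sub_addC : commutative sub_add.
Proof. by move=> x y; apply: sub_val_inj; apply: addrC. Qed.
Lemma sub_add0 : left_id sub_zero sub_add.
Proof. by move=> x; apply: sub_val_inj; apply: add0r. Qed.
Lemma sub_addN : left_inverse sub_zero sub_opp sub_add.
Proof. by move=> x; apply: sub_val_inj; apply: addNr. Qed.

HB.instance Definition _ :=
  GRing.isZmodule.Build sub_carrier sub_addA sub_addC sub_add0 sub_addN.

Lemma sub_scaleA a b x : sub_scale a (sub_scale b x) = sub_scale (a * b) x.
Proof. by apply: sub_val_inj; apply: scalerA. Qed.
Lemma sub_scale1 : left_id 1 sub_scale.
Proof. by move=> x; apply: sub_val_inj; apply: scale1r. Qed.
Lemma sub_scaleDr : right_distributive sub_scale +%R.
Proof. by move=> k x y; apply: sub_val_inj; apply: scalerDr. Qed.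
Lemma sub_scaleDl x : {morph sub_scale^~ x : a b / a + b}.
Proof. by move=> a b; apply: sub_val_inj; apply: scalerDl. Qed.

HB.instance Definition _ := GRing.Zmodule_isLmodule.Build F sub_carrier
  sub_scaleA sub_scale1 sub_scaleDr sub_scaleDl.

Definition sub_ev (x : sub_carrier) := lev (sval x).
Definition sub_od (x : sub_carrier) := lod (sval x).
Definition sub_br (x y : sub_carrier) : sub_carrier :=
  exist S (lbr (sval x) (sval y)) (S_br (svalP x) (svalP y)).

Lemma sub_decomp (x : sub_carrier) :
  exists x0 x1, [/\ sub_ev x0, sub_od x1 & x = x0 + x1].
Proof.
case: x => x Sx; have [x0 [x1 [ex0 ox1 dx]]] := lie_decomp x.
have Sx0 : S x0 by apply: (S_graded ex0 ox1); rewrite -dx.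
have Sx1 : S x1.
  by rewrite -[x1](addKr x0) -dx; apply: (subspaceD S_subspace); [apply: subspaceN|].
by exists (exist S x0 Sx0), (exist S x1 Sx1); split=> //; apply: sub_val_inj.
Qed.

Lemma sub_lieP : is_lie_super sub_ev sub_od sub_br.
Proof.
split; first by split=> [|k u v]; case: (lev_subspace L) => // _; apply.
split; first by split=> [|k u v]; case: (lod_subspace L) => // _; apply.
split; first exact: sub_decomp.
split; first by move=> x ex ox; apply: sub_val_inj; apply: ev_od_eq0.
split; first by move=> k x y z; apply: sub_val_inj; apply: lbr_linl.
split; first by move=> k x y z; apply: sub_val_inj; apply: lbr_linr.
split; first by move=> a b x y; apply: lbr_homog.
split; first by move=> a b x y hx hy; apply: sub_val_inj; apply: lbr_antisym.
by move=> a b c x y z hx hy hz; apply: sub_val_inj; apply: lbr_jacobi hx hy hz.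
Qed.

Definition sub_lie : lieSuper F := LieSuper sub_lieP.

End GradedSubalgebra.

Section QuotientMap.
Variables (F : fieldType) (L Q : lieSuper F) (p : L -> Q) (N : L -> Prop).
Hypothesis p_quo : is_quotient p N.

Lemma quo_lin k x y : p (k *: x + y) = k *: p x + p y.
Proof. by case: p_quo => -[h _ _ _] _ _; apply: h. Qed.
Lemma quo_ev x : lev x -> lev (p x).
Proof. by case: p_quo => -[_ h _ _] _ _; apply: h. Qed.
Lemma quo_od x : lod x -> lod (p x).
Proof. by case: p_quo => -[_ _ h _] _ _; apply: h. Qed.
Lemma quo_br x y : p (lbr x y) = lbr (p x) (p y).
Proof. by case: p_quo => -[_ _ _ h] _ _; apply: h. Qed.
Lemma quo_surj q : exists x, p x = q.
Proof. by case: p_quo => _ h _; apply: h. Qed.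
Lemma quo_ker x : p x = 0 <-> N x. Proof. by case: p_quo => _ _; apply. Qed.

Lemma quo0 : p 0 = 0. Proof. exact: semilin0 quo_lin. Qed.
Lemma quoD x y : p (x + y) = p x + p y. Proof. exact: (semilinD quo_lin). Qed.

End QuotientMap.

Section FibreProduct.
Variables (F : fieldType) (L Q : lieSuper F) (J : Type) (N : J -> L -> Prop).
Variables (p : L -> Q) (Qs Hs : J -> lieSuper F).
Variables (ps : forall i, L -> Qs i) (fs : forall i, Hs i -> Qs i).
Arguments fs : clear implicits.
Hypothesis p_quo : is_quotient p (fun x => forall i, N i x).
Hypothesis ps_quo : forall i, is_quotient (ps i) (N i).
Hypothesis fs_quo : forall i, is_quotient (fs i) (@center F (Hs i)).

Definition fibre_factor (o : option J) : lieSuper F :=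
  if o is Some i then Hs i else Q.
Local Notation P := (prod_lie fibre_factor).

Definition in_fibre (x : P) : Prop :=
  exists l : L, x None = p l /\ forall i, fs i (x (Some i)) = ps i l.

Lemma in_fibre_subspace : subspace in_fibre.
Proof.
split.
  exists 0; split=> [|i]; first by rewrite (quo0 p_quo).
  by rewrite (quo0 (ps_quo i)) -(quo0 (fs_quo i)).
move=> k x y [l [xl fl]] [m [ym fm]]; exists (k *: l + m); split=> [|i].
  by rewrite (quo_lin p_quo) -xl -ym.
by rewrite (quo_lin (ps_quo i)) -fl -fm -(quo_lin (fs_quo i)).
Qed.

Lemma in_fibre_br x y : in_fibre x -> in_fibre y -> in_fibre (lbr x y).
Proof.
move=> [l [xl fl]] [m [ym fm]]; exists (lbr l m); split=> [|i].
  by rewrite (quo_br p_quo) -xl -ym.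
by rewrite (quo_br (ps_quo i)) -fl -fm -(quo_br (fs_quo i)).
Qed.

Lemma in_fibre_graded x0 x1 :
  lev x0 -> lod x1 -> in_fibre (x0 + x1) -> in_fibre x0.
Proof.
move=> ex0 ox1 [l [xl fl]].
have {}ex0 : forall o, lev (x0 o) := ex0.
have {}ox1 : forall o, lod (x1 o) := ox1.
have [l0 [l1 [el0 ol1 dl]]] := lie_decomp l.
exists l0; split=> [|i].
  have [] // := @lie_decomp_uniq _ _ (x0 None) (x1 None) (p l0) (p l1).
  - exact: (quo_ev p_quo el0).
  - exact: (quo_od p_quo ol1).
  by rewrite -(quoD p_quo) -dl -xl.
have [] // := @lie_decomp_uniq _ _ (fs i (x0 (Some i))) (fs i (x1 (Some i)))
  (ps i l0) (ps i l1).
- by apply: (quo_ev (fs_quo i)); apply: ex0.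
- by apply: (quo_od (fs_quo i)); apply: ox1.
- exact: (quo_ev (ps_quo i)).
- exact: (quo_od (ps_quo i)).
by rewrite -(quoD (ps_quo i)) -dl -fl -(quoD (fs_quo i)).
Qed.

Definition fibre_lie : lieSuper F :=
  sub_lie in_fibre_subspace in_fibre_br in_fibre_graded.

Definition fibre_proj (x : fibre_lie) : Q := sval x None.

Definition fibre_elt (q : Q) (h : forall i, Hs i) : P :=
  fun o => if o is Some i return fibre_factor o then h i else q.

Lemma in_fibre_elt l (h : forall i, Hs i) :
  (forall i, fs i (h i) = ps i l) -> in_fibre (fibre_elt (p l) h).
Proof. by move=> hl; exists l. Qed.

Lemma fibre_proj_surj q : exists x : fibre_lie, fibre_proj x = q.
Proof.
have [l <-] := quo_surj p_quo q.
have [h hl] := dfun_choice (fun i => quo_surj (fs_quo i) (ps i l)).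
by exists (exist _ _ (in_fibre_elt hl)).
Qed.

Lemma center_fibre_component (x : fibre_lie) i :
  center x -> center (sval x (Some i)).
Proof.
move=> cx y; have [m fm] := quo_surj (ps_quo i) (fs i y).
have [h [hi hm]] := dfun_choice_with (esym fm) (fun j => quo_surj (fs_quo j) (ps j m)).
have := congr1 (fun z : fibre_lie => sval z (Some i))
  (cx (exist _ _ (in_fibre_elt hm))).
by rewrite /= /prod_br /= hi.
Qed.

Lemma fibre_proj_ker x : fibre_proj x = 0 <-> center x.
Proof.
split=> [px0 y|cx]; have [l [xl fl]] := svalP x.
  have Nl i : N i l by move: i; apply/(quo_ker p_quo); rewrite -xl.
  apply: sub_val_inj; apply: functional_extensionality_dep => -[i|] /=.
    have /(quo_ker (fs_quo i)) : fs i (sval x (Some i)) = 0.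
      by rewrite fl; apply/(quo_ker (ps_quo i)).
    by apply.
  by rewrite /prod_br -/(fibre_proj x) px0 lbr0l.
rewrite /fibre_proj xl; apply/(quo_ker p_quo) => i.
apply/(quo_ker (ps_quo i)); rewrite -fl; apply/(quo_ker (fs_quo i)).
exact: center_fibre_component.
Qed.

Lemma fibre_proj_quotient : is_quotient fibre_proj (@center F fibre_lie).
Proof.
split; [split | exact: fibre_proj_surj | exact: fibre_proj_ker].
- by [].
- by move=> x; apply.
- by move=> x; apply.
- by [].
Qed.

Lemma capable_quotient_bigcap : capable Q.
Proof. by exists fibre_lie, fibre_proj; apply: fibre_proj_quotient. Qed.

End FibreProduct.

Unset Implicit Arguments.
Theorem mainTheorem10 (F : fieldType)
  (h2 : (2%:R : F) != 0) (h3 : (3%:R : F) != 0)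
  (L : lieSuper F) (J : Type) (N : J -> L -> Prop)
  (HN : forall i : J, graded_ideal (N i))
  (Hcap : forall i : J, exists (Q : lieSuper F) (p : L -> Q),
            is_quotient p (N i) /\ capable Q) :
  forall (Q : lieSuper F) (p : L -> Q),
    is_quotient p (fun x => forall i : J, N i x) -> capable Q.
Proof.
move=> Q p p_quo.
have quo_ex i : exists Qp : {Qi : lieSuper F & L -> Qi},
    is_quotient (projT2 Qp) (N i) /\ capable (projT1 Qp).
  by have [Qi [pi hi]] := Hcap i; exists (existT _ Qi pi).
have [Qp Qp_quo] := dfun_choice quo_ex.
have cover_ex i : exists Hf : {H : lieSuper F & H -> projT1 (Qp i)},
    is_quotient (projT2 Hf) (@center F (projT1 Hf)).
  by have [_ [H [f hf]]] := Qp_quo i; exists (existT _ H f).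
have [Hf Hf_quo] := dfun_choice cover_ex.
exact: (capable_quotient_bigcap p_quo (fun i => proj1 (Qp_quo i)) Hf_quo).
Qed.
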